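(* Let $a,b,c,f\in C^\infty(\mathbb R)$, $K_1=uu_1$, $K_3=a u_3+b u_2u_1+c u_1^3$, $Q_1=fu_1$ and $Q_3=af'u_3+(bf'+2af'')u_2u_1+(cf'+\tfrac12bf''+\tfrac12af''')u_1^3$. Define $Q_5=h_1u_5+h_2u_4u_1+h_3u_3u_2+h_4u_3u_1^2+h_5u_2^2u_1+h_6u_2u_1^3+h_7u_1^5$ with $h_1=\tfrac35a^2f''$, $h_2=abf''+\tfrac85aa'f''+\tfrac95a^2f'''$, $h_3=2abf''+2aa'f''+3a^2f'''$, $h_4=\tfrac25b^2f''+\tfrac{11}5acf''+ba'f''+\tfrac{13}{10}ab'f''+\tfrac75af''a''+\tfrac52abf'''+\tfrac{37}{10}aa'f'''+\tfrac{23}{10}a^2f^{(4)}$, $h_5=\tfrac1{10}\big(8b^2f''+5b(a'f''+7af''')+a(14cf''+26b'f''+13f''a''+44a'f'''+31af^{(4)})\big)$, $h_6=\tfrac1{10}\big(9b^2f'''+b(18cf''+9b'f''+4f''a''+15a'f'''+25af^{(4)})+2(4ca'f''+10ac'f''+7af''b''+16acf'''+14ab'f'''+12aa''f'''+2af''a'''+18aa'f^{(4)}+8a^2f^{(5)})\big)$, $h_7=\tfrac18\big(4c^2f''+b^2f^{(4)}+2c(b'f''+2bf'''+a'f'''+2af^{(4)})+b(2c'f''+f''b''+2b'f'''+a''f'''+2a'f^{(4)}+2af^{(5)})+a(2f''c''+4c'f'''+3b''f'''+f'''a'''+f''b'''+3b'f^{(4)}+3a''f^{(4)}+3a'f^{(5)}+af^{(6)})\big)$.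 Then $K_1'[Q_5]-Q_5'[K_1]=Q_3'[K_3]-K_3'[Q_3]$. Hence $u_\tau=Q_1+\hbar^2Q_3+\hbar^4Q_5$ commutes with $u_t=K_1+\hbar^2K_3$ up to terms of order $\hbar^6$.
   Context: $u_k=\partial_x^ku$; $\mathcal D=C^\infty(\mathbb R)[u_1,u_2,\dots]$ with coefficients smooth in $u$, graded by $\deg u_k=k$. Total derivative $D=\sum_{r\ge0}u_{r+1}\partial/\partial u_r$ ($u_0=u$); Fréchet derivative $P'[V]=\sum_{r\ge0}\frac{\partial P}{\partial u_r}D^rV$. Primes and $^{(k)}$ on $a,b,c,f$ denote derivatives with respect to $u$; $\hbar$ is a formal parameter. *)

From Stdlib Require Import Reals Lra.
From Coquelicot Require Import Coquelicot.
Open Scope R_scope.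

(** Jet space: a point is a sequence j with j k = u_k (u_0 = u). *)
Definition jet := nat -> R.

(** A differential function: a real function on jet space (elements of
    D = C^oo(R)[u_1,u_2,...] are represented by the functions they define). *)
Definition dfun := jet -> R.

Definition smooth (g : R -> R) : Prop :=
  forall (k : nat) (x : R), ex_derive (Derive_n g k) x.

Notation "g ^( k )" := (Derive_n g k) (at level 2, format "g ^( k )").

Fixpoint sumN (n : nat) (F : nat -> R) : R :=
  match n with
  | O => 0
  | S m => sumN m F + F m
  end.

Definition upd (j : jet) (r : nat) (t : R) : jet :=
  fun k => if Nat.eqb k r then t else j k.

Definition pd (r : nat) (P : dfun) : dfun :=
  fun j => Derive (fun t => P (upd j r t)) (j r).

(** Total derivative D = sum_{r >= 0} u_{r+1} d/du_r, with the sum truncated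
    at r < N (exact on functions depending only on u_0..u_{N-1}). *)
Definition Dtot (N : nat) (P : dfun) : dfun :=
  fun j => sumN N (fun r => j (S r) * pd r P j).

Fixpoint Diter (N r : nat) (V : dfun) : dfun :=
  match r with
  | O => V
  | S m => Dtot N (Diter N m V)
  end.

Definition frechet (N : nat) (P V : dfun) : dfun :=
  fun j => sumN N (fun r => pd r P j * Diter N r V j).

Definition bracket (N : nat) (P V : dfun) : dfun :=
  fun j => frechet N P V j - frechet N V P j.

Section Flows.
Variables a b c f : R -> R.

Definition K1 : dfun := fun j => j 0%nat * j 1%nat.
Definition K3 : dfun := fun j =>
  a (j 0%nat) * j 3%nat + b (j 0%nat) * j 2%nat * j 1%nat + c (j 0%nat) * (j 1%nat) ^ 3.
Definition Q1 : dfun := fun j => f (j 0%nat) * j 1%nat.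
Definition Q3 : dfun := fun j =>
  let x := j 0%nat in
  a x * f^(1) x * j 3%nat
  + (b x * f^(1) x + 2 * a x * f^(2) x) * j 2%nat * j 1%nat
  + (c x * f^(1) x + /2 * b x * f^(2) x + /2 * a x * f^(3) x) * (j 1%nat) ^ 3.

Definition h1 (x : R) : R := 3/5 * (a x)^2 * f^(2) x.
Definition h2 (x : R) : R :=
  a x * b x * f^(2) x + 8/5 * a x * a^(1) x * f^(2) x + 9/5 * (a x)^2 * f^(3) x.
Definition h3 (x : R) : R :=
  2 * a x * b x * f^(2) x + 2 * a x * a^(1) x * f^(2) x + 3 * (a x)^2 * f^(3) x.
Definition h4 (x : R) : R :=
  2/5 * (b x)^2 * f^(2) x + 11/5 * a x * c x * f^(2) x + b x * a^(1) x * f^(2) x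
  + 13/10 * a x * b^(1) x * f^(2) x + 7/5 * a x * f^(2) x * a^(2) x
  + 5/2 * a x * b x * f^(3) x + 37/10 * a x * a^(1) x * f^(3) x
  + 23/10 * (a x)^2 * f^(4) x.
Definition h5 (x : R) : R :=
  /10 * (8 * (b x)^2 * f^(2) x
         + 5 * b x * (a^(1) x * f^(2) x + 7 * a x * f^(3) x)
         + a x * (14 * c x * f^(2) x + 26 * b^(1) x * f^(2) x
                  + 13 * f^(2) x * a^(2) x + 44 * a^(1) x * f^(3) x
                  + 31 * a x * f^(4) x)).
Definition h6 (x : R) : R :=
  /10 * (9 * (b x)^2 * f^(3) x
         + b x * (18 * c x * f^(2) x + 9 * b^(1) x * f^(2) x
                  + 4 * f^(2) x * a^(2) x + 15 * a^(1) x * f^(3) x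
                  + 25 * a x * f^(4) x)
         + 2 * (4 * c x * a^(1) x * f^(2) x + 10 * a x * c^(1) x * f^(2) x
                + 7 * a x * f^(2) x * b^(2) x + 16 * a x * c x * f^(3) x
                + 14 * a x * b^(1) x * f^(3) x + 12 * a x * a^(2) x * f^(3) x
                + 2 * a x * f^(2) x * a^(3) x + 18 * a x * a^(1) x * f^(4) x
                + 8 * (a x)^2 * f^(5) x)).
Definition h7 (x : R) : R :=
  /8 * (4 * (c x)^2 * f^(2) x + (b x)^2 * f^(4) x
        + 2 * c x * (b^(1) x * f^(2) x + 2 * b x * f^(3) x
                     + a^(1) x * f^(3) x + 2 * a x * f^(4) x)
        + b x * (2 * c^(1) x * f^(2) x + f^(2) x * b^(2) x
                 + 2 * b^(1) x * f^(3) x + a^(2) x * f^(3) x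
                 + 2 * a^(1) x * f^(4) x + 2 * a x * f^(5) x)
        + a x * (2 * f^(2) x * c^(2) x + 4 * c^(1) x * f^(3) x
                 + 3 * b^(2) x * f^(3) x + f^(3) x * a^(3) x
                 + f^(2) x * b^(3) x + 3 * b^(1) x * f^(4) x
                 + 3 * a^(2) x * f^(4) x + 3 * a^(1) x * f^(5) x
                 + a x * f^(6) x)).

Definition Q5 : dfun := fun j =>
  let x := j 0%nat in
  h1 x * j 5%nat + h2 x * j 4%nat * j 1%nat + h3 x * j 3%nat * j 2%nat
  + h4 x * j 3%nat * (j 1%nat)^2 + h5 x * (j 2%nat)^2 * j 1%nat
  + h6 x * j 2%nat * (j 1%nat)^3 + h7 x * (j 1%nat)^5.

Definition Ut (hbar : R) : dfun := fun j => K1 j + hbar^2 * K3 j.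
Definition Utau (hbar : R) : dfun :=
  fun j => Q1 j + hbar^2 * Q3 j + hbar^4 * Q5 j.
End Flows.

(* Elements of D are represented by syntax trees [dpoly] over the jet
   coordinates u_k and the derivatives g^(k)(u) of the coefficients, on which
   the partial derivatives d/du_r are computed symbolically.  An element that
   depends only on u_0, ..., u_{m-1} has a truncated total derivative that does
   not depend on the truncation N >= m, so for N >= 6 every Fréchet derivative
   in the theorem is the value of an explicit symbolic expression, and the
   identity at order hbar^4 becomes a polynomial identity in the u_k and the
   derivatives of a, b, c, f.  The statement about u_t and u_tau then follows
   from the bilinearity of the bracket together with the analogous identities
   [K1,Q1] = 0 and [K1,Q3] + [K3,Q1] = 0 at orders hbar^0 and hbar^2. *)
From Stdlib Require Import Reals Lra Lia FunctionalExtensionality.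
From Coquelicot Require Import Coquelicot.
Open Scope R_scope.

Inductive dpoly : Type :=
| Zero | One | Var (k : nat) | Coef (g : R -> R) (k : nat) | Cst (r : R)
| Add (e1 e2 : dpoly) | Mul (e1 e2 : dpoly).

Fixpoint eval (e : dpoly) (j : jet) : R :=
  match e with
  | Zero => 0
  | One => 1
  | Var k => j k
  | Coef g k => g^(k) (j 0%nat)
  | Cst r => r
  | Add e1 e2 => eval e1 j + eval e2 j
  | Mul e1 e2 => eval e1 j * eval e2 j
  end.

Fixpoint coef_smooth (e : dpoly) : Prop :=
  match e with
  | Coef g _ => smooth g
  | Add e1 e2 | Mul e1 e2 => coef_smooth e1 /\ coef_smooth e2
  | _ => True
  end.

(* [e] depends only on the coordinates u_k with k < ord e. *)
Fixpoint ord (e : dpoly) : nat :=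
  match e with
  | Var k => S k
  | Coef _ _ => 1
  | Add e1 e2 | Mul e1 e2 => Nat.max (ord e1) (ord e2)
  | _ => 0
  end.

Definition is_dpoly (P : dfun) : Prop := exists e, coef_smooth e /\ P = eval e.

Definition mkAdd (e1 e2 : dpoly) : dpoly :=
  match e1, e2 with Zero, _ => e2 | _, Zero => e1 | _, _ => Add e1 e2 end.

Definition mkMul (e1 e2 : dpoly) : dpoly :=
  match e1, e2 with
  | Zero, _ | _, Zero => Zero
  | One, _ => e2
  | _, One => e1
  | _, _ => Mul e1 e2
  end.

Lemma eval_mkAdd e1 e2 j : eval (mkAdd e1 e2) j = eval e1 j + eval e2 j.
Proof. destruct e1, e2; simpl; ring. Qed.

Lemma eval_mkMul e1 e2 j : eval (mkMul e1 e2) j = eval e1 j * eval e2 j.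
Proof. destruct e1, e2; simpl; ring. Qed.

Lemma coef_smooth_mkAdd e1 e2 :
  coef_smooth e1 -> coef_smooth e2 -> coef_smooth (mkAdd e1 e2).
Proof. destruct e1, e2; simpl; tauto. Qed.

Lemma coef_smooth_mkMul e1 e2 :
  coef_smooth e1 -> coef_smooth e2 -> coef_smooth (mkMul e1 e2).
Proof. destruct e1, e2; simpl; tauto. Qed.

Lemma ord_mkAdd e1 e2 : (ord (mkAdd e1 e2) <= Nat.max (ord e1) (ord e2))%nat.
Proof. destruct e1, e2; simpl; lia. Qed.

Lemma ord_mkMul e1 e2 : (ord (mkMul e1 e2) <= Nat.max (ord e1) (ord e2))%nat.
Proof. destruct e1, e2; simpl; lia. Qed.

Fixpoint sumE (n : nat) (F : nat -> dpoly) : dpoly :=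
  match n with O => Zero | S m => mkAdd (sumE m F) (F m) end.

Lemma eval_sumE n F j : eval (sumE n F) j = sumN n (fun r => eval (F r) j).
Proof. induction n; simpl; [|rewrite eval_mkAdd, IHn]; reflexivity. Qed.

Lemma coef_smooth_sumE n F :
  (forall r, coef_smooth (F r)) -> coef_smooth (sumE n F).
Proof. induction n; simpl; auto using coef_smooth_mkAdd. Qed.

Lemma ord_sumE m n F :
  (forall r, (r < n)%nat -> (ord (F r) <= m)%nat) -> (ord (sumE n F) <= m)%nat.
Proof.
  induction n; simpl; intros H; [lia|].
  pose proof (ord_mkAdd (sumE n F) (F n)).
  specialize (IHn (fun r Hr => H r (Nat.lt_lt_succ_r _ _ Hr))); specialize (H n); lia.
Qed.

Fixpoint dpd (r : nat) (e : dpoly) : dpoly :=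
  match e with
  | Zero | One | Cst _ => Zero
  | Var k => if Nat.eqb k r then One else Zero
  | Coef g k => match r with O => Coef g (S k) | S _ => Zero end
  | Add e1 e2 => mkAdd (dpd r e1) (dpd r e2)
  | Mul e1 e2 => mkAdd (mkMul (dpd r e1) e2) (mkMul e1 (dpd r e2))
  end.

Lemma coef_smooth_dpd r e : coef_smooth e -> coef_smooth (dpd r e).
Proof.
  induction e; simpl; intros; try tauto.
  - destruct (Nat.eqb k r); exact I.
  - destruct r; simpl; auto.
  - apply coef_smooth_mkAdd; tauto.
  - apply coef_smooth_mkAdd; apply coef_smooth_mkMul; tauto.
Qed.

Lemma ord_dpd r e : (ord (dpd r e) <= ord e)%nat.
Proof.
  induction e; simpl; try lia.
  - destruct (Nat.eqb k r); simpl; lia.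
  - destruct r; simpl; lia.
  - pose proof (ord_mkAdd (dpd r e1) (dpd r e2)); lia.
  - pose proof (ord_mkAdd (mkMul (dpd r e1) e2) (mkMul e1 (dpd r e2))).
    pose proof (ord_mkMul (dpd r e1) e2); pose proof (ord_mkMul e1 (dpd r e2)); lia.
Qed.

Lemma eval_dpd_ge_ord r e j : (ord e <= r)%nat -> eval (dpd r e) j = 0.
Proof.
  induction e; simpl; intros Hr; try reflexivity.
  - destruct (Nat.eqb_spec k r); [lia | reflexivity].
  - destruct r; [lia | reflexivity].
  - rewrite eval_mkAdd, IHe1, IHe2 by lia; ring.
  - rewrite eval_mkAdd, !eval_mkMul, IHe1, IHe2 by lia; ring.
Qed.

Lemma upd_same j r : upd j r (j r) = j.
Proof.
  apply functional_extensionality; intro k; unfold upd.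
  destruct (Nat.eqb_spec k r); subst; reflexivity.
Qed.

Lemma is_derive_eval_upd e r j : coef_smooth e ->
  is_derive (fun t => eval e (upd j r t)) (j r) (eval (dpd r e) j).
Proof.
  induction e; simpl; intros He.
  - exact (is_derive_const _ _).
  - exact (is_derive_const _ _).
  - unfold upd; destruct (Nat.eqb k r); [exact (is_derive_id _) | exact (is_derive_const _ _)].
  - unfold upd; destruct r as [|r]; simpl.
    + apply Derive_correct, He.
    + exact (is_derive_const _ _).
  - exact (is_derive_const _ _).
  - rewrite eval_mkAdd; apply (is_derive_plus (fun t => eval e1 (upd j r t))); tauto.
  - rewrite eval_mkAdd, !eval_mkMul.
    assert (Hmul := is_derive_mult (fun t => eval e1 (upd j r t))
      (fun t => eval e2 (upd j r t)) (j r) _ _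
      (IHe1 (proj1 He)) (IHe2 (proj2 He)) Rmult_comm).
    cbv beta in Hmul; rewrite upd_same in Hmul; exact Hmul.
Qed.

Lemma pd_eval r e j : coef_smooth e -> pd r (eval e) j = eval (dpd r e) j.
Proof. intro He; apply is_derive_unique, is_derive_eval_upd, He. Qed.

Lemma sumN_ext n F G : (forall r, (r < n)%nat -> F r = G r) -> sumN n F = sumN n G.
Proof.
  induction n; simpl; intros H; [reflexivity|].
  rewrite IHn, H; [reflexivity | lia | intros r Hr; apply H; lia].
Qed.

Lemma sumN_trunc m N F : (forall r, (m <= r)%nat -> F r = 0) -> (m <= N)%nat ->
  sumN N F = sumN m F.
Proof.
  intros H HN; induction N; simpl.
  - replace m with 0%nat by lia; reflexivity.
  - destruct (Nat.eq_dec m (S N)) as [->|]; [reflexivity|].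
    rewrite IHN, H by lia; ring.
Qed.

Lemma sumN_axpy n F G k :
  sumN n (fun r => F r + k * G r) = sumN n F + k * sumN n G.
Proof. induction n; simpl; [|rewrite IHn]; ring. Qed.

Definition dtot (m : nat) (e : dpoly) : dpoly :=
  sumE m (fun r => mkMul (Var (S r)) (dpd r e)).

Lemma coef_smooth_dtot m e : coef_smooth e -> coef_smooth (dtot m e).
Proof.
  intro He; apply coef_smooth_sumE; intro r.
  apply coef_smooth_mkMul; [exact I | apply coef_smooth_dpd, He].
Qed.

Lemma ord_dtot m e : (ord (dtot m e) <= Nat.max (S m) (ord e))%nat.
Proof.
  apply ord_sumE; intros r Hr.
  pose proof (ord_mkMul (Var (S r)) (dpd r e)); pose proof (ord_dpd r e).
  change (ord (Var (S r))) with (S (S r)) in *; lia.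
Qed.

Lemma Dtot_eval N e : coef_smooth e -> Dtot N (eval e) = eval (dtot N e).
Proof.
  intro He; apply functional_extensionality; intro j.
  unfold Dtot, dtot; rewrite eval_sumE; apply sumN_ext; intros r _.
  rewrite eval_mkMul, pd_eval by exact He; reflexivity.
Qed.

Lemma eval_dtot_trunc m N e j : (ord e <= m <= N)%nat ->
  eval (dtot N e) j = eval (dtot m e) j.
Proof.
  intro Hm; unfold dtot; rewrite !eval_sumE; apply sumN_trunc; [|lia].
  intros r Hr; rewrite eval_mkMul, eval_dpd_ge_ord by lia; ring.
Qed.

Fixpoint dtot_iter (m r : nat) (e : dpoly) : dpoly :=
  match r with O => e | S r' => dtot (m + r') (dtot_iter m r' e) end.

Lemma coef_smooth_dtot_iter m r e : coef_smooth e -> coef_smooth (dtot_iter m r e).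
Proof. induction r; simpl; auto using coef_smooth_dtot. Qed.

Lemma ord_dtot_iter m r e : (ord e <= m)%nat -> (ord (dtot_iter m r e) <= m + r)%nat.
Proof.
  intro He; induction r; simpl; [lia|].
  pose proof (ord_dtot (m + r) (dtot_iter m r e)); lia.
Qed.

Lemma Diter_eval N r e : coef_smooth e -> (ord e + r <= S N)%nat ->
  Diter N r (eval e) = eval (dtot_iter (ord e) r e).
Proof.
  intros He; induction r; simpl; intros Hr; [reflexivity|].
  rewrite IHr, Dtot_eval by (auto using coef_smooth_dtot_iter; lia).
  apply functional_extensionality; intro j; apply eval_dtot_trunc.
  pose proof (ord_dtot_iter (ord e) r e (le_n _)); lia.
Qed.

Definition frechet_expr (P V : dpoly) : dpoly :=
  sumE (ord P) (fun r => mkMul (dpd r P) (dtot_iter (ord V) r V)).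

Lemma frechet_eval N P V j : coef_smooth P -> coef_smooth V ->
  (ord P <= N)%nat -> (ord V + ord P <= S (S N))%nat ->
  frechet N (eval P) (eval V) j = eval (frechet_expr P V) j.
Proof.
  intros HP HV HPN HVP; unfold frechet, frechet_expr; rewrite eval_sumE.
  assert (Htail : forall r, (ord P <= r)%nat -> pd r (eval P) j * Diter N r (eval V) j = 0)
    by (intros r Hr; rewrite pd_eval, eval_dpd_ge_ord by assumption; ring).
  rewrite (sumN_trunc (ord P) N _ Htail HPN).
  apply sumN_ext; intros r Hr.
  rewrite eval_mkMul, pd_eval, Diter_eval by (auto; lia); reflexivity.
Qed.

Lemma pd_axpy r P Q k j : is_dpoly P -> is_dpoly Q ->
  pd r (fun x => P x + k * Q x) j = pd r P j + k * pd r Q j.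
Proof.
  intros [e1 [H1 ->]] [e2 [H2 ->]].
  change (fun x => eval e1 x + k * eval e2 x) with (eval (Add e1 (Mul (Cst k) e2))).
  rewrite !pd_eval by (simpl; tauto); cbn [dpd].
  rewrite !eval_mkAdd, !eval_mkMul; simpl; ring.
Qed.

Lemma is_dpoly_Dtot N P : is_dpoly P -> is_dpoly (Dtot N P).
Proof.
  intros [e [He ->]]; exists (dtot N e).
  split; [apply coef_smooth_dtot, He | apply Dtot_eval, He].
Qed.

Lemma is_dpoly_Diter N r P : is_dpoly P -> is_dpoly (Diter N r P).
Proof. intro HP; induction r; simpl; auto using is_dpoly_Dtot. Qed.

Lemma Dtot_axpy N P Q k j : is_dpoly P -> is_dpoly Q ->
  Dtot N (fun x => P x + k * Q x) j = Dtot N P j + k * Dtot N Q j.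
Proof.
  intros HP HQ; unfold Dtot; rewrite <- sumN_axpy; apply sumN_ext; intros r _.
  rewrite pd_axpy by assumption; ring.
Qed.

Lemma Diter_axpy N r P Q k j : is_dpoly P -> is_dpoly Q ->
  Diter N r (fun x => P x + k * Q x) j = Diter N r P j + k * Diter N r Q j.
Proof.
  intros HP HQ; revert j; induction r; intro j; simpl; [reflexivity|].
  replace (Diter N r (fun x => P x + k * Q x))
    with (fun x => Diter N r P x + k * Diter N r Q x)
    by (apply functional_extensionality; intro; symmetry; apply IHr).
  apply Dtot_axpy; apply is_dpoly_Diter; assumption.
Qed.

Lemma frechet_axpy_l N P Q V k j : is_dpoly P -> is_dpoly Q ->
  frechet N (fun x => P x + k * Q x) V j = frechet N P V j + k * frechet N Q V j.
Proof.
  intros HP HQ; unfold frechet; rewrite <- sumN_axpy; apply sumN_ext; intros r _.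
  rewrite pd_axpy by assumption; ring.
Qed.

Lemma frechet_axpy_r N P Q U k j : is_dpoly P -> is_dpoly Q ->
  frechet N U (fun x => P x + k * Q x) j = frechet N U P j + k * frechet N U Q j.
Proof.
  intros HP HQ; unfold frechet; rewrite <- sumN_axpy; apply sumN_ext; intros r _.
  rewrite Diter_axpy by assumption; ring.
Qed.

Lemma bracket_axpy_l N P Q V k j : is_dpoly P -> is_dpoly Q ->
  bracket N (fun x => P x + k * Q x) V j = bracket N P V j + k * bracket N Q V j.
Proof.
  intros HP HQ; unfold bracket.
  rewrite frechet_axpy_l, frechet_axpy_r by assumption; ring.
Qed.

Lemma bracket_axpy_r N P Q U k j : is_dpoly P -> is_dpoly Q ->
  bracket N U (fun x => P x + k * Q x) j = bracket N U P j + k * bracket N U Q j.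
Proof.
  intros HP HQ; unfold bracket.
  rewrite frechet_axpy_l, frechet_axpy_r by assumption; ring.
Qed.

(* [reify_dfun P] returns [e] with [eval e] meant to be convertible to [P]; an
   unrecognised subterm becomes a [Cst], and if it mentions the jet the later
   conversion check [P = eval e] fails rather than producing a wrong [e]. *)
Ltac reify_term j t :=
  lazymatch t with
  | j ?k => constr:(Var k)
  | ?x + ?y =>
      let ex := reify_term j x in let ey := reify_term j y in constr:(Add ex ey)
  | ?x * ?y =>
      let ex := reify_term j x in let ey := reify_term j y in constr:(Mul ex ey)
  | _ ^ O => constr:(One)
  | ?x ^ S ?n =>
      let ex := reify_term j x in let en := reify_term j (x ^ n) in constr:(Mul ex en)
  | Derive_n ?g ?k (j O) => constr:(Coef g k)
  | ?g (j O) => constr:(Coef g O)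
  | _ => constr:(Cst t)
  end.

Ltac reify_dfun P :=
  let F := constr:(fun x : jet =>
    ltac:(let t := eval cbv beta zeta in (P x) in let e := reify_term x t in exact e)) in
  eval cbv beta in (F (fun _ => 0)).

Ltac prove_is_dpoly :=
  lazymatch goal with
  | |- is_dpoly ?P =>
      let e := reify_dfun P in exists e; split; [simpl; tauto | reflexivity]
  end.

Ltac frechet_to_eval :=
  repeat lazymatch goal with
  | |- context [frechet ?N ?P ?V ?j] =>
      let eP := reify_dfun P in
      let eV := reify_dfun V in
      change (frechet N P V j) with (frechet N (eval eP) (eval eV) j);
      rewrite (frechet_eval N eP eV j) by (simpl; tauto || lia)
  end.

Ltac unfold_flows := unfold K1, K3, Q1, Q3, Q5, h1, h2, h3, h4, h5, h6, h7.

Ltac bracket_identity :=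
  unfold bracket; unfold_flows;
  frechet_to_eval;
  cbv [eval frechet_expr sumE dpd dtot_iter dtot mkAdd mkMul ord Nat.eqb Nat.add Nat.max];
  field.

Section Flows.
Variables a b c f : R -> R.
Hypotheses (Ha : smooth a) (Hb : smooth b) (Hc : smooth c) (Hf : smooth f).
Variable N : nat.
Hypothesis HN : (6 <= N)%nat.

Lemma bracket_K1_Q1 j : bracket N K1 (Q1 f) j = 0.
Proof. bracket_identity. Qed.

Lemma bracket_order2 j :
  bracket N K1 (Q3 a b c f) j = - bracket N (K3 a b c) (Q1 f) j.
Proof. bracket_identity. Qed.

Lemma bracket_order4 j :
  bracket N K1 (Q5 a b c f) j = - bracket N (K3 a b c) (Q3 a b c f) j.
Proof. bracket_identity. Qed.

Lemma bracket_Ut_Utau hbar j :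
  bracket N (Ut a b c hbar) (Utau a b c f hbar) j
  = hbar ^ 6 * bracket N (K3 a b c) (Q5 a b c f) j.
Proof.
  unfold Ut, Utau.
  rewrite bracket_axpy_l, !bracket_axpy_r by (unfold_flows; prove_is_dpoly).
  rewrite bracket_K1_Q1, bracket_order2, bracket_order4; ring.
Qed.

End Flows.

Theorem mainTheorem3 (a b c f : R -> R) :
  smooth a -> smooth b -> smooth c -> smooth f ->
  forall N : nat, (6 <= N)%nat ->
    (forall j : jet,
       frechet N K1 (Q5 a b c f) j - frechet N (Q5 a b c f) K1 j
       = frechet N (Q3 a b c f) (K3 a b c) j - frechet N (K3 a b c) (Q3 a b c f) j)
    /\
    (exists Rem : dfun, forall (hbar : R) (j : jet),
       bracket N (Ut a b c hbar) (Utau a b c f hbar) j = hbar ^ 6 * Rem j).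
Proof.
  intros Ha Hb Hc Hf N HN; split.
  - intro j; pose proof (bracket_order4 a b c f Ha Hb Hc Hf N HN j) as H.
    unfold bracket in H; lra.
  - exists (bracket N (K3 a b c) (Q5 a b c f)); intros hbar j.
    apply bracket_Ut_Utau; assumption.
Qed.
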